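(* Let $\mathscr H$ be a complex Hilbert space and let $\mathbf{T}=(T_1,\dots,T_d)\in\mathbb{B}(\mathscr H)^d$ be a normal $d$-tuple. Then $$\|\mathbf{T}^2\|=\|(T_1^*T_1,T_2^*T_2,\dots,T_d^*T_d)\|\le\|\mathbf{T}\|^2=\|\mathbf{T}^*\|^2\le\sqrt{d}\,\|\mathbf{T}^2\|.$$
   Context: $\mathbb{B}(\mathscr H)$ denotes the bounded linear operators on $\mathscr H$. A $d$-tuple $\mathbf{T}=(T_1,\dots,T_d)$ is normal if $T_iT_j=T_jT_i$ for all $i,j$ and each $T_i$ is a normal operator. The joint operator norm is $\|\mathbf{T}\|=\sup\{(\sum_{k=1}^d\|T_kx\|^2)^{1/2}: x\in\mathscr H,\|x\|=1\}$. Operations are componentwise: $\mathbf{T}^2=(T_1^2,\dots,T_d^2)$, $\mathbf{T}^*=(T_1^*,\dots,T_d^* )$. *)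

From HB Require Import structures.
From mathcomp Require Import all_boot all_order all_algebra.
From mathcomp Require Import complex.
From mathcomp Require Import boolp classical_sets reals.
Set Implicit Arguments. Unset Strict Implicit. Unset Printing Implicit Defensive.
Import Order.TTheory GRing.Theory Num.Theory.
Local Open Scope ring_scope.
Local Open Scope classical_set_scope.

Section Hilbert.
Variables (R : realType) (V : lmodType R[i]) (ip : V -> V -> R[i]).

Definition inner_product_axioms : Prop :=
  [/\ forall (a : R[i]) (x y z : V), ip (a *: x + y) z = a * ip x z + ip y z,
      forall x y : V, ip y x = conjc (ip x y),
      forall x : V, 0 <= ip x x &
      forall x : V, ip x x = 0 -> x = 0].

Definition hnorm (x : V) : R := Num.sqrt (complex.Re (ip x x)).

Definition hcauchy (u : nat -> V) : Prop :=
  forall e : R, 0 < e -> exists N : nat, forall m n : nat,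
    (N <= m)%N -> (N <= n)%N -> hnorm (u m - u n) < e.

Definition hconverges (u : nat -> V) (l : V) : Prop :=
  forall e : R, 0 < e -> exists N : nat, forall n : nat,
    (N <= n)%N -> hnorm (u n - l) < e.

Definition is_hilbert_space : Prop :=
  inner_product_axioms /\
  forall u : nat -> V, hcauchy u -> exists l : V, hconverges u l.

Definition bounded_operator (T : V -> V) : Prop :=
  (forall (a : R[i]) (x y : V), T (a *: x + y) = a *: T x + T y) /\
  exists C : R, forall x : V, hnorm (T x) <= C * hnorm x.

Definition is_adjoint (T S : V -> V) : Prop :=
  forall x y : V, ip (T x) y = ip x (S y).

Definition joint_norm (d : nat) (T : 'I_d -> V -> V) : R :=
  sup [set r : R | exists x : V, hnorm x = 1 /\
         r = Num.sqrt (\sum_(k < d) hnorm (T k x) ^+ 2)].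

Definition normal_tuple (d : nat) (T Tadj : 'I_d -> V -> V) : Prop :=
  (forall i j : 'I_d, T i \o T j = T j \o T i) /\
  (forall i : 'I_d, Tadj i \o T i = T i \o Tadj i).

End Hilbert.

(* Write q_S(x) = \sum_k ||S_k x||^2, so that the joint norm ||S|| is the
   supremum of sqrt (q_S x) over unit vectors x.  The proof rests on three
   facts about bounded tuples and one identity for normal operators:
   - two tuples whose components have pointwise equal norms have equal joint
     norms; for a normal operator T with adjoint T^*, ||T^* x|| = ||T x||.
     This gives ||T^2|| = ||(T_k^* T_k)_k|| and ||T|| = ||T^*||;
   - q_S(y) <= ||S||^2 ||y||^2, hence ||(S_k U_k)_k|| <= ||S|| ||U||, which
     gives ||(T_k^* T_k)_k|| = ||T^2|| <= ||T||^2;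
   - for a unit vector x, ||T_k x||^2 = Re <x, T_k^* T_k x> <= ||T_k^2 x||
     (Cauchy-Schwarz and normality), and the Cauchy-Schwarz inequality in R^d
     bounds \sum_k ||T_k^2 x|| by sqrt d * sqrt (q_{T^2} x), whence
     ||T||^2 <= sqrt d ||T^2||. *)

From HB Require Import structures.
From mathcomp Require Import all_boot all_order all_algebra.
From mathcomp Require Import complex.
From mathcomp Require Import boolp classical_sets reals.
From mathcomp Require Import ring lra.
Import Order.TTheory GRing.Theory Num.Theory.
Local Open Scope ring_scope.
Local Open Scope complex_scope.
Local Open Scope classical_set_scope.

Lemma sqr_sum_le_card_sum_sqr {R : realFieldType} {d : nat} (a : 'I_d -> R) :
  (\sum_k a k) ^+ 2 <= d%:R * \sum_k a k ^+ 2.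
Proof.
rewrite expr2 mulr_suml; under eq_bigr do rewrite mulr_sumr.
apply: (@le_trans _ _ (\sum_(j < d) \sum_(k < d) (a j ^+ 2 / 2 + a k ^+ 2 / 2))).
  apply: ler_sum => j _; apply: ler_sum => k _.
  have := sqr_ge0 (a j - a k); nra.
under eq_bigr do rewrite big_split /= sumr_const card_ord.
rewrite big_split /= sumr_const card_ord sumrMnl.
by rewrite -mulr_suml -mulrnDl -splitr mulr_natl.
Qed.

Lemma sum_le_sqrt_card_norm {R : rcfType} {d : nat} (a : 'I_d -> R) :
  \sum_k a k <= Num.sqrt d%:R * Num.sqrt (\sum_k a k ^+ 2).
Proof.
rewrite -sqrtrM //; apply: le_trans (ler_norm _) _.
rewrite -sqrtr_sqr ler_sqrt ?sqr_sum_le_card_sum_sqr //.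
by rewrite mulr_ge0 // sumr_ge0 // => k _; rewrite sqr_ge0.
Qed.

(* Since [sup] is 0 on sets without a supremum, a nonnegative upper bound
   bounds [sup E] without any side condition on E. *)
Lemma sup_le_nonneg_ub {R : realType} {E : set R} {b : R} :
  0 <= b -> (forall r, E r -> r <= b) -> sup E <= b.
Proof.
move=> b_ge0 Eb; have [[E0 _]|noSup] := pselect (has_sup E).
  exact: ge_sup.
by rewrite sup_out.
Qed.

(* Likewise, a set of nonnegative reals has a nonnegative [sup]. *)
Lemma sup_ge0_of_nonneg {R : realType} {E : set R} :
  (forall r, E r -> 0 <= r) -> 0 <= sup E.
Proof.
move=> E_ge0; have [[[r Er] ubE]|noSup] := pselect (has_sup E).
  by apply: le_trans (E_ge0 r Er) _; apply: ub_le_sup.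
by rewrite sup_out.
Qed.

Section ComplexRe.
Variable R : rcfType.
Implicit Types (k : R) (y z : R[i]).

Lemma Re_conjc z : complex.Re (conjc z) = complex.Re z.
Proof. by case: z. Qed.

Lemma Re_realM k z : complex.Re (k%:C * z) = k * complex.Re z.
Proof. by case: z => a b /=; rewrite mul0r subr0. Qed.

Lemma ReD y z : complex.Re (y + z) = complex.Re y + complex.Re z.
Proof. by case: y; case: z. Qed.

Lemma ReN z : complex.Re (- z) = - complex.Re z.
Proof. by case: z. Qed.

End ComplexRe.

Section InnerProduct.
Set Implicit Arguments. Unset Strict Implicit.
Variables (R : realType) (V : lmodType R[i]) (ip : V -> V -> R[i]).
Hypothesis ip_axioms : inner_product_axioms ip.
Implicit Types (a : R[i]) (x y z w : V).

Lemma ip0l z : ip 0 z = 0.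
Proof.
case: ip_axioms => ipDZ _ _ _.
by have := ipDZ (-1) 0 0 z; rewrite scaler0 addr0 mulN1r addNr => <-.
Qed.

Lemma ipZl a x z : ip (a *: x) z = a * ip x z.
Proof. by case: ip_axioms => ipDZ _ _ _; rewrite -[a *: x]addr0 ipDZ ip0l addr0. Qed.

Lemma ipDl x y z : ip (x + y) z = ip x z + ip y z.
Proof. by case: ip_axioms => ipDZ _ _ _; have := ipDZ 1 x y z; rewrite scale1r mul1r. Qed.

Lemma ipNl x z : ip (- x) z = - ip x z.
Proof. by rewrite -scaleN1r ipZl mulN1r. Qed.

Lemma ip_conj x y : ip y x = conjc (ip x y).
Proof. by case: ip_axioms. Qed.

Lemma ipDr x y z : ip z (x + y) = ip z x + ip z y.
Proof. by rewrite (ip_conj (x + y)) ipDl rmorphD (ip_conj x) (ip_conj y). Qed.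

Lemma ipNr x z : ip z (- x) = - ip z x.
Proof. by rewrite (ip_conj (- x)) ipNl rmorphN (ip_conj x). Qed.

Lemma ipZr a x z : ip z (a *: x) = conjc a * ip z x.
Proof. by rewrite (ip_conj (a *: x)) ipZl rmorphM (ip_conj x). Qed.

Lemma Re_ip_ge0 x : 0 <= complex.Re (ip x x).
Proof. by case: ip_axioms => _ _ ip_ge0 _; have := ip_ge0 x; rewrite lecE => /andP[]. Qed.

Lemma hnorm_ge0 x : 0 <= hnorm ip x.
Proof. exact: sqrtr_ge0. Qed.

Lemma hnorm_sqr x : hnorm ip x ^+ 2 = complex.Re (ip x x).
Proof. by rewrite /hnorm sqr_sqrtr // Re_ip_ge0. Qed.

Lemma hnormZ (c : R) x : 0 <= c -> hnorm ip (c%:C *: x) = c * hnorm ip x.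
Proof.
move=> c_ge0; rewrite /hnorm ipZl ipZr conjc_real mulrA -rmorphM Re_realM.
by rewrite sqrtrM ?mulr_ge0 // sqrtr_sqr ger0_norm.
Qed.

Lemma hnorm_sqr_realZB (c : R) x w :
  complex.Re (ip (c%:C *: x - w) (c%:C *: x - w)) =
  c ^+ 2 * complex.Re (ip x x) - (c * complex.Re (ip x w)) *+ 2
  + complex.Re (ip w w).
Proof.
rewrite !ipDl !ipDr !ipZl !ipNl !ipZr !ipNr ?ipZl ?ipNl conjc_real.
by rewrite (ip_conj x w) !ReD !ReN !mulrA -rmorphM !Re_realM Re_conjc; ring.
Qed.

(* Cauchy-Schwarz for a unit vector: Re <x, w> <= ||w||.  It follows from
   0 <= ||c x - w||^2 with c = Re <x, w>. *)
Lemma Re_ip_le_hnorm x w : hnorm ip x = 1 -> complex.Re (ip x w) <= hnorm ip w.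
Proof.
move=> x1; have xx1 : complex.Re (ip x x) = 1 by rewrite -hnorm_sqr x1 expr1n.
have := Re_ip_ge0 ((complex.Re (ip x w))%:C *: x - w).
rewrite hnorm_sqr_realZB xx1 -hnorm_sqr => h.
have := hnorm_ge0 w; nra.
Qed.

(* A normal operator and its adjoint have the same norm at every vector:
   ||T^* x||^2 = <T T^* x, x> = <T^* T x, x> = conj ||T x||^2. *)
Lemma normal_hnorm_adjoint (T Tadj : V -> V) :
  is_adjoint ip T Tadj -> Tadj \o T = T \o Tadj ->
  forall x, hnorm ip (Tadj x) = hnorm ip (T x).
Proof.
move=> T_adj T_normal x; rewrite /hnorm -T_adj.
have -> : T (Tadj x) = Tadj (T x) by have := congr1 (fun f => f x) T_normal.
by rewrite ip_conj -T_adj Re_conjc.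
Qed.

Lemma linear_opZ (S : V -> V) a x :
  bounded_operator ip S -> S (a *: x) = a *: S x.
Proof.
case=> S_lin _; have S0 : S 0 = 0.
  by have := S_lin (-1) 0 0; rewrite scaler0 addr0 scaleN1r addNr.
by rewrite -[a *: x]addr0 S_lin S0 addr0.
Qed.

Lemma bounded_operator_comp (S U : V -> V) :
  bounded_operator ip S -> bounded_operator ip U ->
  bounded_operator ip (S \o U).
Proof.
move=> [S_lin [CS S_le]] [U_lin [CU U_le]]; split=> [a x y|] /=.
  by rewrite U_lin S_lin.
exists (`|CS| * `|CU|) => x /=; rewrite -mulrA.
apply: le_trans (S_le (U x)) _.
apply: le_trans (ler_wpM2r (hnorm_ge0 _) (ler_norm CS)) _.
rewrite ler_wpM2l //; apply: le_trans (U_le x) _.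
by rewrite ler_wpM2r ?hnorm_ge0 ?ler_norm.
Qed.

Definition joint_sqr (d : nat) (S : 'I_d -> V -> V) (x : V) : R :=
  \sum_k hnorm ip (S k x) ^+ 2.

Lemma joint_sqr_ge0 (d : nat) (S : 'I_d -> V -> V) x : 0 <= joint_sqr S x.
Proof. by apply: sumr_ge0 => k _; apply: sqr_ge0. Qed.

Lemma hnorm_sqr_le_joint_sqr (d : nat) (S : 'I_d -> V -> V) k x :
  hnorm ip (S k x) ^+ 2 <= joint_sqr S x.
Proof.
rewrite /joint_sqr (bigD1 k) //= lerDl.
by apply: sumr_ge0 => j _; apply: sqr_ge0.
Qed.

Lemma joint_norm_ge0 (d : nat) (S : 'I_d -> V -> V) : 0 <= joint_norm ip S.
Proof. by apply: sup_ge0_of_nonneg => _ [x [_ ->]]; apply: sqrtr_ge0. Qed.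

Lemma joint_norm_le (d : nat) (S : 'I_d -> V -> V) (b : R) :
  0 <= b -> (forall x, hnorm ip x = 1 -> joint_sqr S x <= b ^+ 2) ->
  joint_norm ip S <= b.
Proof.
move=> b_ge0 Sb; apply: sup_le_nonneg_ub => // _ [x [x1 ->]].
by rewrite -(ger0_norm b_ge0) -sqrtr_sqr ler_sqrt ?sqr_ge0 ?Sb.
Qed.

Lemma joint_norm_ext (d : nat) (S U : 'I_d -> V -> V) :
  (forall k x, hnorm ip (S k x) = hnorm ip (U k x)) ->
  joint_norm ip S = joint_norm ip U.
Proof.
move=> SU; rewrite /joint_norm; congr sup; apply: funext => r; apply: propext.
by split=> -[x [x1 ->]]; exists x; split=> //; congr Num.sqrt;
  apply: eq_bigr => k _; rewrite SU.
Qed.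

Section BoundedTuple.
Variables (d : nat) (S : 'I_d -> V -> V).
Hypothesis S_bounded : forall k, bounded_operator ip (S k).

Lemma joint_norm_set_ubound :
  has_ubound [set r | exists x, hnorm ip x = 1 /\ r = Num.sqrt (joint_sqr S x)].
Proof.
have [C S_le] := choice (fun k => (S_bounded k).2).
exists (Num.sqrt (\sum_k C k ^+ 2)) => _ [x [x1 ->]].
rewrite ler_sqrt; last by apply: sumr_ge0 => k _; apply: sqr_ge0.
apply: ler_sum => k _; have := S_le k x; rewrite x1 mulr1.
have := hnorm_ge0 (S k x); nra.
Qed.

Lemma sqrt_joint_sqr_le_unit x :
  hnorm ip x = 1 -> Num.sqrt (joint_sqr S x) <= joint_norm ip S.
Proof. by move=> x1; apply: ub_le_sup joint_norm_set_ubound _ _; exists x. Qed.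

Lemma joint_sqr_le_unit x : hnorm ip x = 1 -> joint_sqr S x <= joint_norm ip S ^+ 2.
Proof.
move=> x1; rewrite -(sqr_sqrtr (joint_sqr_ge0 S x)).
by rewrite ler_sqr ?nnegrE ?sqrtr_ge0 ?joint_norm_ge0 ?sqrt_joint_sqr_le_unit.
Qed.

Lemma joint_sqr_hnorm0 x : hnorm ip x = 0 -> joint_sqr S x = 0.
Proof.
move=> x0; apply: big1 => k _; have [C S_le] := (S_bounded k).2.
have := S_le x; rewrite x0 mulr0 => Skx_le0.
have -> : hnorm ip (S k x) = 0 by apply/eqP; rewrite eq_le Skx_le0 hnorm_ge0.
by rewrite expr0n.
Qed.

Lemma joint_sqr_le y : joint_sqr S y <= joint_norm ip S ^+ 2 * hnorm ip y ^+ 2.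
Proof.
have [y0|ny_neq0] := eqVneq (hnorm ip y) 0.
  by rewrite joint_sqr_hnorm0 // y0 expr0n mulr0.
set n := hnorm ip y in ny_neq0 *.
have ninv_ge0 : 0 <= n^-1 by rewrite invr_ge0 hnorm_ge0.
have ny1 : hnorm ip ((n^-1)%:C *: y) = 1 by rewrite hnormZ // mulVf.
have q_scale : joint_sqr S ((n^-1)%:C *: y) = n^-1 ^+ 2 * joint_sqr S y.
  rewrite /joint_sqr mulr_sumr; apply: eq_bigr => k _.
  by rewrite linear_opZ // hnormZ // exprMn.
have := joint_sqr_le_unit ny1; rewrite q_scale => h.
have -> : joint_sqr S y = n ^+ 2 * (n^-1 ^+ 2 * joint_sqr S y).
  by rewrite mulrA -exprMn mulfV // expr1n mul1r.
by rewrite mulrC; apply: ler_wpM2r => //; apply: sqr_ge0.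
Qed.

End BoundedTuple.

Lemma joint_norm_comp_le (d : nat) (S U : 'I_d -> V -> V) :
  (forall k, bounded_operator ip (S k)) -> (forall k, bounded_operator ip (U k)) ->
  joint_norm ip (fun k => S k \o U k) <= joint_norm ip S * joint_norm ip U.
Proof.
move=> S_bounded U_bounded.
apply: joint_norm_le; first by rewrite mulr_ge0 ?joint_norm_ge0.
move=> x x1; apply: (@le_trans _ _ (joint_norm ip S ^+ 2 * joint_sqr U x)).
  rewrite /joint_sqr mulr_sumr; apply: ler_sum => k _ /=.
  exact: le_trans (hnorm_sqr_le_joint_sqr S k _) (joint_sqr_le S_bounded _).
by rewrite exprMn ler_wpM2l ?sqr_ge0 ?joint_sqr_le_unit.
Qed.

End InnerProduct.

Section NormalTuple.
Set Implicit Arguments. Unset Strict Implicit.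
Variables (R : realType) (V : lmodType R[i]) (ip : V -> V -> R[i]).
Variables (d : nat) (T Tadj : 'I_d -> V -> V).
Hypothesis ip_axioms : inner_product_axioms ip.
Hypothesis T_bounded : forall k, bounded_operator ip (T k).
Hypothesis T_adjoint : forall k, is_adjoint ip (T k) (Tadj k).
Hypothesis T_normal : forall k, Tadj k \o T k = T k \o Tadj k.

(* On a unit vector, ||T_k x||^2 = Re <x, T_k^* T_k x> <= ||T_k^* T_k x||
   = ||T_k^2 x||. *)
Lemma joint_sqr_le_sum_sqr_norm x :
  hnorm ip x = 1 -> joint_sqr ip T x <= \sum_k hnorm ip (T k (T k x)).
Proof.
move=> x1; apply: ler_sum => k _.
rewrite (hnorm_sqr ip_axioms) T_adjoint.
rewrite -(normal_hnorm_adjoint ip_axioms (T_adjoint k) (T_normal k)).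
exact: Re_ip_le_hnorm.
Qed.

Lemma joint_norm_sqr_le_sqrt_card :
  joint_norm ip T ^+ 2 <= Num.sqrt d%:R * joint_norm ip (fun k => T k \o T k).
Proof.
set G := joint_norm ip (fun k => T k \o T k).
have G_ge0 : 0 <= Num.sqrt d%:R * G by rewrite mulr_ge0 ?sqrtr_ge0 ?joint_norm_ge0.
have T2_bounded k : bounded_operator ip (T k \o T k) by apply: bounded_operator_comp.
suff : joint_norm ip T <= Num.sqrt (Num.sqrt d%:R * G).
  by move=> le_sqrt; rewrite -(sqr_sqrtr G_ge0) ler_sqr ?nnegrE ?sqrtr_ge0 ?joint_norm_ge0.
apply: joint_norm_le; first exact: sqrtr_ge0.
move=> x x1; rewrite sqr_sqrtr //.
apply: (le_trans (joint_sqr_le_sum_sqr_norm x1)).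
apply: le_trans (sum_le_sqrt_card_norm _) _.
by rewrite ler_wpM2l ?sqrtr_ge0 ?(sqrt_joint_sqr_le_unit T2_bounded).
Qed.

End NormalTuple.

Theorem theorem2p5 (R : realType) (V : lmodType R[i]) (ip : V -> V -> R[i])
  (d : nat) (T Tadj : 'I_d -> V -> V) :
  is_hilbert_space ip ->
  (forall k : 'I_d, bounded_operator ip (T k)) ->
  (forall k : 'I_d, is_adjoint ip (T k) (Tadj k)) ->
  normal_tuple T Tadj ->
  let T2 := fun k : 'I_d => T k \o T k in
  let TadjT := fun k : 'I_d => Tadj k \o T k in
  [/\ joint_norm ip T2 = joint_norm ip TadjT,
      joint_norm ip TadjT <= joint_norm ip T ^+ 2,
      joint_norm ip T ^+ 2 = joint_norm ip Tadj ^+ 2 &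
      joint_norm ip T ^+ 2 <= Num.sqrt (d%:R) * joint_norm ip T2].
Proof.
move=> [ip_axioms _] T_bounded T_adjoint [_ T_normal] T2 TadjT.
have adj_norm k := normal_hnorm_adjoint ip_axioms (T_adjoint k) (T_normal k).
have T2_TadjT : joint_norm ip T2 = joint_norm ip TadjT.
  by apply: joint_norm_ext => k x; rewrite /= adj_norm.
split=> //.
- by rewrite -T2_TadjT expr2; apply: joint_norm_comp_le.
- by rewrite (@joint_norm_ext _ _ _ _ T Tadj) // => k x; rewrite adj_norm.
- exact: joint_norm_sqr_le_sqrt_card.
Qed.
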